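(* Consider the quadratic finite-horizon dynamic multi-agent system described in the context, with constants $\gamma,\alpha,\beta,\rho>0$ such that $\|\mathbf x_i(0)\|\le\gamma$, $\|\mathbf A_i\|\le\alpha$, $\|\mathbf B_i\|\le\beta$ and $\mathbf H_i\succeq\rho\mathbf I$ for all $i\in\mathcal V$, and assume $C(t)>0$ for all $t\in\mathcal T$. Let $\lambda^\dagger>0$ and let $\delta_{\max}>0$ satisfy $$\delta_{\max}\sum_{t=1}^{N}\gamma\,\alpha^{2t-1}\le\frac{\sqrt{C(0)\rho}}{n\beta}\lambda^\dagger,$$ and, for every $k\in\mathcal T$ with $k\neq0$, $$\delta_{\max}\sum_{t=k+1}^{N}\Big[\gamma\,\alpha^{2t-k-1}+\beta\sum_{j=0}^{k-1}\sqrt{\tfrac{C(j)}{\rho}}\;\alpha^{2t-j-k-2}\Big]\le\frac{\sqrt{C(k)\rho}}{n\beta}\lambda^\dagger.$$ Then for every choice of symmetric positive definite matrices $\mathbf Q_i,\mathbf R_i$ ($i\in\mathcal V$) with $\|\mathbf Q_i\|\le\delta_{\max}$, every competitive equilibrium $(\boldsymbol\lambda^\ast,\mathbf U^\ast,\mathbf E^\ast)$ satisfies $\lambda^\ast_t\le\lambda^\dagger$ for all $t\in\mathcal T$.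
   Context: Finite-horizon dynamic multi-agent system: $n$ agents $\mathcal V=\{1,\dots,n\}$, horizon $N\ge1$, $\mathcal T=\{0,\dots,N-1\}$. Agent $i$ has state $\mathbf x_i(t)\in\mathbb R^d$, input $\mathbf u_i(t)\in\mathbb R^m$, dynamics $\mathbf x_i(t+1)=\mathbf A_i\mathbf x_i(t)+\mathbf B_i\mathbf u_i(t)$ with given $\mathbf x_i(0)$, excess resource $a_i(t)\in\mathbb R$, and $C(t)=\sum_{i=1}^na_i(t)$. Quadratic case: agent $i$'s parameter is $\theta_i=(\mathbf Q_i,\mathbf R_i)$ with $\mathbf Q_i\in\mathbb R^{d\times d}$, $\mathbf R_i\in\mathbb R^{m\times m}$ symmetric positive definite; running utility $f(\mathbf x,\mathbf u;\theta_i)=-\mathbf x^\top\mathbf Q_i\mathbf x-\mathbf u^\top\mathbf R_i\mathbf u$; terminal utility $\phi(\mathbf x;\theta_i)=-\mathbf x^\top\mathbf Q_i\mathbf x$; consumption $h_i(\mathbf u)=\mathbf u^\top\mathbf H_i\mathbf u$ with $\mathbf H_i$ symmetric positive definite. Norms are Euclidean / induced operator norms. A competitive equilibrium is a triple $(\boldsymbol\lambda^\ast,\mathbf U^\ast,\mathbf E^\ast)$, $\boldsymbol\lambda^\ast=(\lambda^\ast_0,\dots,\lambda^\ast_{N-1})\in\mathbb R^N$, such that (i) for each $i\in\mathcal V$, $(\mathbf U_i^\ast,\mathbf E_i^\ast)=((\mathbf u_i^\ast(t))_{t\in\mathcal T},(e_i^\ast(t))_{t\in\mathcal T})$ is a maximizer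 of $\phi(\mathbf x_i(N);\theta_i)+\sum_{t=0}^{N-1}\big(f(\mathbf x_i(t),\mathbf u_i(t);\theta_i)+\lambda^\ast_t e_i(t)\big)$ over all inputs $\mathbf u_i(t)\in\mathbb R^m$ and trades $e_i(t)\in\mathbb R$ subject to the dynamics and $e_i(t)\le a_i(t)-h_i(\mathbf u_i(t))$ for all $t\in\mathcal T$; and (ii) $\sum_{i=1}^ne_i^\ast(t)=0$ for all $t\in\mathcal T$. *)

From HB Require Import structures.
From mathcomp Require Import all_boot all_order all_algebra.
From mathcomp Require Import classical_sets reals.
Set Implicit Arguments. Unset Strict Implicit. Unset Printing Implicit Defensive.
Import Order.TTheory GRing.Theory Num.Theory.
Local Open Scope ring_scope.
Local Open Scope classical_set_scope.

Section Defs.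
Variable R : realType.

Definition vnorm (k : nat) (v : 'cV[R]_k) : R :=
  Num.sqrt (\sum_(i < k) v i 0 ^+ 2).

Definition opnorm (p q : nat) (M : 'M[R]_(p, q)) : R :=
  sup [set vnorm (M *m v) | v in [set v : 'cV[R]_q | vnorm v <= 1]].

Definition quad (k : nat) (M : 'M[R]_k) (v : 'cV[R]_k) : R :=
  ((v^T *m M) *m v) 0 0.

Definition symmetric_mx (k : nat) (M : 'M[R]_k) : Prop := M^T = M.
Definition pos_def (k : nat) (M : 'M[R]_k) : Prop :=
  forall v : 'cV[R]_k, v != 0 -> 0 < quad M v.
Definition sym_pd (k : nat) (M : 'M[R]_k) : Prop := symmetric_mx M /\ pos_def M.
(* positive semidefinite; H >= rho I  is  psd (H - rho%:M) *)
Definition psd (k : nat) (M : 'M[R]_k) : Prop := forall v : 'cV[R]_k, 0 <= quad M v.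

Fixpoint traj (d m : nat) (A : 'M[R]_d) (B : 'M[R]_(d, m)) (x0 : 'cV[R]_d)
    (u : nat -> 'cV[R]_m) (t : nat) : 'cV[R]_d :=
  match t with
  | 0 => x0
  | t'.+1 => A *m traj A B x0 u t' + B *m u t'
  end.

Definition Ctot (n : nat) (a : 'I_n -> nat -> R) (t : nat) : R := \sum_(i < n) a i t.

Definition payoff (N d m : nat) (A : 'M[R]_d) (B : 'M[R]_(d, m)) (x0 : 'cV[R]_d)
    (Q : 'M[R]_d) (Rm : 'M[R]_m) (lam : nat -> R)
    (u : nat -> 'cV[R]_m) (e : nat -> R) : R :=
  - quad Q (traj A B x0 u N)
  + \sum_(t < N) (- quad Q (traj A B x0 u t) - quad Rm (u t) + lam t * e t).

Definition feasible (N m : nat) (H : 'M[R]_m) (ai : nat -> R)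
    (u : nat -> 'cV[R]_m) (e : nat -> R) : Prop :=
  forall t, (t < N)%N -> e t <= ai t - quad H (u t).

Definition competitive_equilibrium (n N d m : nat)
    (A : 'I_n -> 'M[R]_d) (B : 'I_n -> 'M[R]_(d, m)) (x0 : 'I_n -> 'cV[R]_d)
    (H : 'I_n -> 'M[R]_m) (a : 'I_n -> nat -> R)
    (Q : 'I_n -> 'M[R]_d) (Rm : 'I_n -> 'M[R]_m)
    (lam : nat -> R) (U : 'I_n -> nat -> 'cV[R]_m) (E : 'I_n -> nat -> R) : Prop :=
  (forall i : 'I_n,
     feasible N (H i) (a i) (U i) (E i) /\
     forall (u : nat -> 'cV[R]_m) (e : nat -> R),
       feasible N (H i) (a i) u e ->
       payoff N (A i) (B i) (x0 i) (Q i) (Rm i) lam u e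
       <= payoff N (A i) (B i) (x0 i) (Q i) (Rm i) lam (U i) (E i)) /\
  (forall t, (t < N)%N -> \sum_(i < n) E i t = 0).

End Defs.

(* At a positive price lambda_t every budget constraint binds, so the market
   clears with sum_i h_i(u_i(t)) = C(t) and some agent consumes at least C(t)/n.
   That agent's optimal inputs minimise a convex quadratic cost.  Its
   first-order conditions in the directions "u only at time t" and "u from time
   t on", combined with Cauchy-Schwarz for the Q-inner product, give
     lambda_t h(u(t)) <= dmax S alpha beta |x(t)| |u(t)|,
   S = sum_{tau > t} alpha^(2 (tau - t - 1)).  Bounding |x(t)| through the
   dynamics with |u(j)| <= sqrt (C(j) / rho), and using h(u) >= rho |u|^2, the
   hypothesis at k = t turns this into lambda_t <= lambda^dagger. *)

From HB Require Import structures.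
From mathcomp Require Import all_boot all_order all_algebra.
From mathcomp Require Import classical_sets reals.
From mathcomp Require Import ring lra zify.
Import Order.TTheory GRing.Theory Num.Theory.
Set Implicit Arguments. Unset Strict Implicit. Unset Printing Implicit Defensive.
Local Open Scope ring_scope.

Section RealInequalities.
Variable R : rcfType.

Lemma le0_of_le_scaled (X Y : R) :
  (forall r, 0 < r -> r <= 1 -> X <= r * Y) -> X <= 0.
Proof.
move=> hXY; rewrite leNgt; apply/negP => X0.
have XY : X <= Y by have := hXY 1 ltr01 (lexx _); rewrite mul1r.
have Y0 : 0 < Y by apply: lt_le_trans XY.
have r0 : 0 < X / (2 * Y) by rewrite divr_gt0 // mulr_gt0.
have r1 : X / (2 * Y) <= 1 by rewrite ler_pdivrMr ?mulr_gt0 // mul1r; lra.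
have := hXY _ r0 r1.
have -> : X / (2 * Y) * Y = X / 2 by field; lra.
lra.
Qed.

(* A quadratic [X - 2 t B + t^2 Y] that is nonnegative for all [t] has
   nonpositive discriminant [B^2 - X Y]. *)
Lemma le_sqrtM_of_quadratic_ge0 (X Y B : R) :
  0 <= Y -> (forall t, 0 <= X - 2 * t * B + t ^+ 2 * Y) ->
  B <= Num.sqrt X * Num.sqrt Y.
Proof.
move=> Y0 hq.
have X0 : 0 <= X by have := hq 0; rewrite !(mul0r, mulr0, expr0n) /=; lra.
have [B0|B0] := lerP B 0.
  by apply: le_trans B0 _; rewrite mulr_ge0 ?sqrtr_ge0.
have [Ye|Yn] := eqVneq Y 0.
  have := hq ((X + 1) / (2 * B)); rewrite Ye mulr0 addr0.
  have -> : 2 * ((X + 1) / (2 * B)) * B = X + 1 by field; lra.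
  lra.
have Yp : 0 < Y by rewrite lt_neqAle eq_sym Yn.
have B2 : B ^+ 2 <= X * Y.
  have : 0 <= (X - 2 * (B / Y) * B + (B / Y) ^+ 2 * Y) * Y.
    by rewrite mulr_ge0 // ltW.
  have -> : (X - 2 * (B / Y) * B + (B / Y) ^+ 2 * Y) * Y = X * Y - B ^+ 2.
    by field; lra.
  lra.
rewrite -sqrtrM // -(ger0_norm (ltW B0)) -sqrtr_sqr ler_sqrt //.
by rewrite mulr_ge0 // ltW.
Qed.

Lemma big_quadratic (n : nat) (F G K : 'I_n -> R) (r : R) :
  \sum_(i < n) (F i - 2 * r * G i + r ^+ 2 * K i) =
  \sum_(i < n) F i - 2 * r * \sum_(i < n) G i + r ^+ 2 * \sum_(i < n) K i.
Proof. by rewrite big_split sumrB /= !mulr_sumr. Qed.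

Lemma cauchy_schwarz_sum (k : nat) (a b : 'I_k -> R) :
  \sum_(i < k) a i * b i <=
  Num.sqrt (\sum_(i < k) a i ^+ 2) * Num.sqrt (\sum_(i < k) b i ^+ 2).
Proof.
apply: le_sqrtM_of_quadratic_ge0; first by apply: sumr_ge0 => i _; rewrite sqr_ge0.
move=> t; rewrite -big_quadratic; apply: sumr_ge0 => i _.
have -> : a i ^+ 2 - 2 * t * (a i * b i) + t ^+ 2 * b i ^+ 2 = (a i - t * b i) ^+ 2.
  by ring.
exact: sqr_ge0.
Qed.

Lemma cauchy_schwarz_sum_sqr (k : nat) (a b : 'I_k -> R) :
  (\sum_(i < k) a i * b i) ^+ 2 <=
  (\sum_(i < k) a i ^+ 2) * (\sum_(i < k) b i ^+ 2).
Proof.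
have A0 : 0 <= \sum_(i < k) a i ^+ 2 by apply: sumr_ge0 => i _; rewrite sqr_ge0.
have B0 : 0 <= \sum_(i < k) b i ^+ 2 by apply: sumr_ge0 => i _; rewrite sqr_ge0.
have hpos := cauchy_schwarz_sum a b.
have hneg := cauchy_schwarz_sum (fun i => - a i) b.
have sumNab : \sum_(i < k) (- a i) * b i = - \sum_(i < k) a i * b i.
  by rewrite -sumrN; apply: eq_bigr => i _; rewrite mulNr.
have sumNa2 : \sum_(i < k) (- a i) ^+ 2 = \sum_(i < k) a i ^+ 2.
  by apply: eq_bigr => i _; rewrite sqrrN.
rewrite sumNab sumNa2 in hneg.
rewrite -(sqr_sqrtr A0) -(sqr_sqrtr B0) -exprMn.
rewrite -ler_sqrt ?exprn_ge0 ?mulr_ge0 ?sqrtr_ge0 // !sqrtr_sqr.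
rewrite (ger0_norm (mulr_ge0 (sqrtr_ge0 _) (sqrtr_ge0 _))).
rewrite ler_norml hpos andbT; lra.
Qed.

Lemma le_mulr_of_two_bounds (K z p q : R) :
  0 <= z -> 0 <= p -> 0 <= q ->
  K <= z * p - z ^+ 2 -> K <= z * q -> K <= p * q.
Proof.
move=> z0 p0 q0 Kp Kq; have [zp|pz] := lerP z p.
  by apply: le_trans Kq _; rewrite ler_wpM2r.
apply: le_trans Kp _; rewrite expr2 -mulrBr.
apply: (@le_trans _ _ 0); last by rewrite mulr_ge0.
by rewrite mulr_ge0_le0 // subr_le0 ltW.
Qed.

Lemma exists_ge_mean (n : nat) (f : 'I_n -> R) :
  (0 < n)%N -> exists i, (\sum_(i < n) f i) / n%:R <= f i.
Proof.
move=> n0; set S := \sum_(i < n) f i.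
apply/existsP/contraT; rewrite negb_exists => /forallP hlt.
have : S < \sum_(i < n) S / n%:R.
  pose i0 : 'I_n := Ordinal n0.
  rewrite {1}/S (bigD1 i0) //= [X in _ < X](bigD1 i0) //=.
  apply: ltr_leD; first by rewrite ltNge hlt.
  by apply: ler_sum => i _; rewrite ltW // ltNge hlt.
by rewrite sumr_const card_ord -(mulr_natr (S / n%:R)) divfK ?ltxx // pnatr_eq0 -lt0n.
Qed.

(* The final estimate for a largest consumer: consumption [h], input size [nu],
   [n] agents.  From [lam h <= c nu] and [rho nu^2 <= h] one gets
   [lam^2 h rho <= c^2], and [C <= n h] turns this into [lam <= lamd]. *)
Lemma price_le_of_bounds (lam lamd h nu c C rho n : R) :
  0 < rho -> 0 < C -> 0 <= lamd -> 1 <= n -> 0 <= nu ->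
  rho * nu ^+ 2 <= h -> C <= n * h -> lam * h <= c * nu ->
  n * c <= Num.sqrt (C * rho) * lamd -> lam <= lamd.
Proof.
move=> rho0 C0 lamd0 n1 nu0 h_nu C_h lam_h nc.
have [//|lamd_lt] := lerP lam lamd.
have h0 : 0 < h by nra.
have lam0 : 0 < lam by apply: le_lt_trans lamd_lt.
have c0 : 0 <= c.
  rewrite leNgt; apply/negP => c_lt0.
  have : c * nu <= 0 by rewrite mulr_le0_ge0 // ltW.
  have : 0 < lam * h by rewrite mulr_gt0.
  lra.
have sq_lam_h : (lam * h) ^+ 2 <= (c * nu) ^+ 2.
  by rewrite !expr2 ler_pM // mulr_ge0 // ltW.
have lam2 : lam ^+ 2 * h * rho <= c ^+ 2.
  rewrite -(ler_pM2r h0); rewrite !exprMn in sq_lam_h.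
  have : c ^+ 2 * (rho * nu ^+ 2) <= c ^+ 2 * h by rewrite ler_wpM2l ?sqr_ge0.
  nra.
have sq_nc : (n * c) ^+ 2 <= C * rho * lamd ^+ 2.
  have Crho0 : 0 <= C * rho by rewrite mulr_ge0 // ltW.
  rewrite -(sqr_sqrtr Crho0) -exprMn !expr2.
  by apply: ler_pM; rewrite ?mulr_ge0 ?sqrtr_ge0 //; lra.
have : lam ^+ 2 * C * rho <= C * rho * lamd ^+ 2.
  have lam2rho0 : 0 <= lam ^+ 2 * rho by rewrite mulr_ge0 ?sqr_ge0 // ltW.
  have e1 : lam ^+ 2 * C * rho <= n * (lam ^+ 2 * h * rho).
    by rewrite -mulrAC [X in _ <= X](_ : _ = lam ^+ 2 * rho * (n * h)); [rewrite ler_wpM2l|ring].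
  have e2 : n * (lam ^+ 2 * h * rho) <= n ^+ 2 * c ^+ 2.
    have hn : n <= n ^+ 2 by rewrite expr2 ler_peMl //; lra.
    apply: (le_trans (ler_wpM2l _ lam2) _); first lra.
    by rewrite ler_wpM2r ?sqr_ge0.
  rewrite exprMn in sq_nc; lra.
have : lamd ^+ 2 < lam ^+ 2 by rewrite ltr_pXn2r // ?nnegrE // ltW.
have : 0 < C * rho by rewrite mulr_gt0.
nra.
Qed.

End RealInequalities.

Section Vectors.
Variable R : realType.
Implicit Types (k : nat) (r : R).

Definition dot k (v w : 'cV[R]_k) : R := \sum_(i < k) v i 0 * w i 0.
Definition bilin k (M : 'M[R]_k) (v w : 'cV[R]_k) : R := dot v (M *m w).

Lemma vnorm_ge0 k (v : 'cV[R]_k) : 0 <= vnorm v.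
Proof. exact: sqrtr_ge0. Qed.

Lemma dotvv k (v : 'cV[R]_k) : dot v v = vnorm v ^+ 2.
Proof.
rewrite /vnorm sqr_sqrtr; last by apply: sumr_ge0 => i _; rewrite sqr_ge0.
by apply: eq_bigr => i _; rewrite expr2.
Qed.

Lemma dotC k (v w : 'cV[R]_k) : dot v w = dot w v.
Proof. by apply: eq_bigr => i _; rewrite mulrC. Qed.

Lemma dotDr k (v w1 w2 : 'cV[R]_k) : dot v (w1 + w2) = dot v w1 + dot v w2.
Proof. by rewrite /dot -big_split; apply: eq_bigr => i _; rewrite mxE mulrDr. Qed.

Lemma dotNr k (v w : 'cV[R]_k) : dot v (- w) = - dot v w.
Proof. by rewrite /dot -sumrN; apply: eq_bigr => i _; rewrite mxE mulrN. Qed.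

Lemma dotZr k (v w : 'cV[R]_k) r : dot v (r *: w) = r * dot v w.
Proof. by rewrite /dot mulr_sumr; apply: eq_bigr => i _; rewrite mxE mulrCA. Qed.

Lemma dot0r k (v : 'cV[R]_k) : dot v 0 = 0.
Proof. by rewrite /dot big1 // => i _; rewrite mxE mulr0. Qed.

Lemma dot_le_vnorm k (v w : 'cV[R]_k) : dot v w <= vnorm v * vnorm w.
Proof. exact: cauchy_schwarz_sum. Qed.

Lemma vnormD k (v w : 'cV[R]_k) : vnorm (v + w) <= vnorm v + vnorm w.
Proof.
have hsq : vnorm (v + w) ^+ 2 <= (vnorm v + vnorm w) ^+ 2.
  rewrite -dotvv dotDr ![dot (v + w) _]dotC !dotDr !dotvv [dot w v]dotC.
  have := dot_le_vnorm v w; lra.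
by rewrite -(ler_pXn2r (isT : (0 < 2)%N)) // ?nnegrE ?addr_ge0 ?vnorm_ge0.
Qed.

Lemma vnormZ k (v : 'cV[R]_k) r : vnorm (r *: v) = `|r| * vnorm v.
Proof.
rewrite /vnorm -sqrtr_sqr -sqrtrM ?sqr_ge0 // mulr_sumr; congr Num.sqrt.
by apply: eq_bigr => i _; rewrite mxE exprMn.
Qed.

Lemma vnorm0 k : vnorm (0 : 'cV[R]_k) = 0.
Proof. by rewrite -(scale0r 0) vnormZ normr0 mul0r. Qed.

Lemma vnorm_mulmx_le_frobenius p q (M : 'M[R]_(p, q)) v :
  vnorm (M *m v) <= Num.sqrt (\sum_(i < p) \sum_(j < q) M i j ^+ 2) * vnorm v.
Proof.
have M0 : 0 <= \sum_(i < p) \sum_(j < q) M i j ^+ 2.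
  by apply: sumr_ge0 => i _; apply: sumr_ge0 => j _; rewrite sqr_ge0.
rewrite /vnorm -sqrtrM // ler_sqrt; last first.
  by rewrite mulr_ge0 // sumr_ge0 // => i _; rewrite sqr_ge0.
rewrite mulr_suml; apply: ler_sum => i _; rewrite mxE.
exact: (cauchy_schwarz_sum_sqr (fun j => M i j) (fun j => v j 0)).
Qed.

(* The Frobenius bound makes the set in [opnorm] bounded; otherwise [sup]
   would return a junk value. *)
Lemma vnorm_mulmx_le_opnorm p q (M : 'M[R]_(p, q)) v :
  vnorm (M *m v) <= opnorm M * vnorm v.
Proof.
have hs : has_sup [set vnorm (M *m v) | v in [set v : 'cV[R]_q | vnorm v <= 1]].
  split; first by exists (vnorm (M *m 0)), 0 => //=; rewrite vnorm0 ler01.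
  exists (Num.sqrt (\sum_(i < p) \sum_(j < q) M i j ^+ 2)) => _ [w /= w1 <-].
  apply: (le_trans (vnorm_mulmx_le_frobenius M w)).
  by rewrite -[X in _ <= X]mulr1 ler_wpM2l ?sqrtr_ge0.
have [v0|vn] := eqVneq (vnorm v) 0.
  by have := vnorm_mulmx_le_frobenius M v; rewrite v0 !mulr0.
have vp : 0 < vnorm v by rewrite lt_neqAle eq_sym vn vnorm_ge0.
have hunit : vnorm (M *m ((vnorm v)^-1 *: v)) <= opnorm M.
  apply: (sup_upper_bound hs); exists ((vnorm v)^-1 *: v) => //=.
  by rewrite vnormZ ger0_norm ?invr_ge0 ?vnorm_ge0 // mulVf.
rewrite -scalemxAr vnormZ ger0_norm ?invr_ge0 ?vnorm_ge0 // in hunit.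
by rewrite -ler_pdivrMr // mulrC.
Qed.

Lemma vnorm_iter_mulmx_le k (A : 'M[R]_k) al v p :
  0 <= al -> opnorm A <= al -> vnorm (iter p (mulmx A) v) <= al ^+ p * vnorm v.
Proof.
move=> al0 hA; elim: p => [|p IH]; first by rewrite expr0 mul1r.
rewrite iterS exprS -mulrA.
apply: (le_trans (vnorm_mulmx_le_opnorm _ _)).
apply: (le_trans (ler_wpM2r (vnorm_ge0 _) hA)).
by rewrite ler_wpM2l.
Qed.

Lemma quad_bilin k (M : 'M[R]_k) v : quad M v = bilin M v v.
Proof. by rewrite /quad /bilin /dot -mulmxA mxE; apply: eq_bigr => i _; rewrite mxE. Qed.

Lemma bilinC k (M : 'M[R]_k) v w : M^T = M -> bilin M v w = bilin M w v.
Proof.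
move=> HM; rewrite /bilin /dot.
under eq_bigr do rewrite mxE mulr_sumr.
under [RHS]eq_bigr do rewrite mxE mulr_sumr.
rewrite exchange_big /=; apply: eq_bigr => i _; apply: eq_bigr => j _.
have : M^T i j = M i j by rewrite HM.
by rewrite mxE => ->; ring.
Qed.

Lemma bilinDr k (M : 'M[R]_k) v w1 w2 :
  bilin M v (w1 + w2) = bilin M v w1 + bilin M v w2.
Proof. by rewrite /bilin mulmxDr dotDr. Qed.

Lemma bilinNr k (M : 'M[R]_k) v w : bilin M v (- w) = - bilin M v w.
Proof. by rewrite /bilin mulmxN dotNr. Qed.

Lemma bilinBr k (M : 'M[R]_k) v w1 w2 :
  bilin M v (w1 - w2) = bilin M v w1 - bilin M v w2.
Proof. by rewrite bilinDr bilinNr. Qed.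

Lemma bilin0r k (M : 'M[R]_k) v : bilin M v 0 = 0.
Proof. by rewrite /bilin mulmx0 dot0r. Qed.

Lemma bilin0l k (M : 'M[R]_k) v : bilin M 0 v = 0.
Proof. by rewrite /bilin /dot big1 // => i _; rewrite mxE mul0r. Qed.

Lemma quadBZ k (M : 'M[R]_k) v w r : M^T = M ->
  quad M (v - r *: w) = quad M v - 2 * r * bilin M v w + r ^+ 2 * quad M w.
Proof.
move=> HM; have hwv : dot w (M *m v) = dot v (M *m w) := bilinC w v HM.
rewrite !quad_bilin /bilin mulmxBr -scalemxAr dotDr dotNr dotZr.
rewrite ![dot (v - r *: w) _]dotC !dotDr !dotNr !dotZr.
rewrite ![dot (M *m _) _]dotC hwv; ring.
Qed.

Lemma quadN k (M : 'M[R]_k) v : quad M (- v) = quad M v.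
Proof. by rewrite !quad_bilin /bilin mulmxN /dot; apply: eq_bigr => i _; rewrite !mxE; ring. Qed.

Lemma quad0 k (M : 'M[R]_k) : quad M 0 = 0.
Proof. by rewrite quad_bilin bilin0l. Qed.

Lemma sym_pd_quad_ge0 k (M : 'M[R]_k) v : sym_pd M -> 0 <= quad M v.
Proof.
move=> [_ HP]; have [->|vn] := eqVneq v 0; first by rewrite quad0.
exact: ltW (HP v vn).
Qed.

Lemma quad_le_opnorm k (M : 'M[R]_k) v dl :
  opnorm M <= dl -> quad M v <= dl * vnorm v ^+ 2.
Proof.
move=> hM; rewrite quad_bilin /bilin.
apply: (le_trans (dot_le_vnorm _ _)).
apply: (le_trans (ler_wpM2l (vnorm_ge0 v) (vnorm_mulmx_le_opnorm M v))).
have := ler_wpM2r (vnorm_ge0 v) hM; have := vnorm_ge0 v; nra.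
Qed.

Lemma quad_subr_scalar k (M : 'M[R]_k) v r :
  quad (M - r%:M) v = quad M v - r * vnorm v ^+ 2.
Proof.
have mxB : forall X Y : 'M[R]_1, (X - Y) 0 0 = X 0 0 - Y 0 0 by move=> X Y; rewrite !mxE.
rewrite /quad mulmxBr mulmxBl mxB; congr (_ - _).
rewrite mul_mx_scalar -scalemxAl mxE -dotvv /dot mxE.
by congr (_ * _); apply: eq_bigr => i _; rewrite !mxE.
Qed.

Lemma cauchy_schwarz_bilin_sum n k (M : 'M[R]_k) (f g : 'I_n -> 'cV[R]_k) :
  M^T = M -> (forall v, 0 <= quad M v) ->
  \sum_(i < n) bilin M (f i) (g i) <=
  Num.sqrt (\sum_(i < n) quad M (f i)) * Num.sqrt (\sum_(i < n) quad M (g i)).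
Proof.
move=> HM Hp; apply: le_sqrtM_of_quadratic_ge0; first by apply: sumr_ge0 => i _.
by move=> t; rewrite -big_quadratic; apply: sumr_ge0 => i _; rewrite -quadBZ.
Qed.

End Vectors.

Lemma sum_ord_single (R : zmodType) (F : nat -> R) k N :
  (k < N)%N -> (forall t, t != k -> F t = 0) -> \sum_(t < N) F t = F k.
Proof.
move=> kN hF; rewrite (bigD1 (Ordinal kN)) //= big1 ?addr0 // => j hj.
by apply: hF; apply: contra hj => /eqP ej; apply/eqP/val_inj.
Qed.

Lemma sum_ord_tail (R : zmodType) (F : nat -> R) k N : (k <= N)%N ->
  \sum_(t < N.+1) (if (k < t)%N then F t else 0) = \sum_(k.+1 <= t < N.+1) F t.
Proof.
move=> kN; rewrite -(big_mkord xpredT (fun t => if (k < t)%N then F t else 0)).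
rewrite (big_cat_nat _ (m := 0) (n := k.+1)) //= ?ltnS //.
rewrite big_nat_cond big1 ?add0r; last first.
  by move=> i /andP[/andP[_ hi] _]; rewrite ltnNge -ltnS hi.
by apply: eq_big_nat => i /andP[hi _]; rewrite hi.
Qed.

Section AgentCost.
Variable R : realType.
Variables (N d m : nat) (A : 'M[R]_d) (B : 'M[R]_(d, m)) (x0 : 'cV[R]_d)
  (Q : 'M[R]_d) (Rm : 'M[R]_m) (H : 'M[R]_m) (lam : nat -> R).

Local Notation traj := (traj A B).

Lemma traj_subZ (u D : nat -> 'cV[R]_m) r t :
  traj x0 (fun s => u s - r *: D s) t = traj x0 u t - r *: traj 0 D t.
Proof.
elim: t => [|t IH] /=; first by rewrite scaler0 subr0.
by rewrite IH mulmxBr mulmxBr -!scalemxAr scalerDr opprD addrACA.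
Qed.

(* Once the budget constraint binds, maximising the payoff amounts to
   minimising this cost, with the price acting as a weight on consumption. *)
Definition cost (u : nat -> 'cV[R]_m) : R :=
  \sum_(t < N.+1) quad Q (traj x0 u t) +
  \sum_(t < N) (quad Rm (u t) + lam t * quad H (u t)).

Definition cost_bilin (u D : nat -> 'cV[R]_m) : R :=
  \sum_(t < N.+1) bilin Q (traj x0 u t) (traj 0 D t) +
  \sum_(t < N) (bilin Rm (u t) (D t) + lam t * bilin H (u t) (D t)).

Definition cost_quad (D : nat -> 'cV[R]_m) : R :=
  \sum_(t < N.+1) quad Q (traj 0 D t) +
  \sum_(t < N) (quad Rm (D t) + lam t * quad H (D t)).

Lemma payoff_cost u e : payoff N A B x0 Q Rm lam u e =
  - cost u + \sum_(t < N) lam t * (e t + quad H (u t)).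
Proof.
rewrite /payoff /cost big_ord_recr /= !opprD -!sumrN.
have -> : forall (a S1 S2 S3 : R), S1 - a + S2 + S3 = - a + (S1 + S2 + S3).
  by move=> *; ring.
by congr (_ + _); rewrite -!big_split /=; apply: eq_bigr => t _; ring.
Qed.

Lemma payoff_shift_trade u e k c : (k < N)%N ->
  payoff N A B x0 Q Rm lam u (fun s => e s + (if s == k then c else 0)) =
  payoff N A B x0 Q Rm lam u e + lam k * c.
Proof.
move=> kN; rewrite /payoff -!addrA; congr (_ + _).
rewrite (eq_bigr (fun t : 'I_N => (- quad Q (traj x0 u t) - quad Rm (u t) + lam t * e t)
                   + lam t * (if (t : nat) == k then c else 0))); last by move=> t _; ring.
rewrite big_split /=; congr (_ + _).
rewrite (@sum_ord_single _ (fun t => lam t * (if t == k then c else 0)) k) //.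
  by rewrite eqxx.
by move=> t /negbTE ->; rewrite mulr0.
Qed.

Lemma payoff_max_cost_min (a : nat -> R) U E :
  feasible N H a U E ->
  (forall u e, feasible N H a u e ->
     payoff N A B x0 Q Rm lam u e <= payoff N A B x0 Q Rm lam U E) ->
  forall v, cost U <= cost v.
Proof.
move=> fU opt v.
have hf : feasible N H a v (fun t => E t + quad H (U t) - quad H (v t)).
  by move=> t tN; have := fU t tN; lra.
have := opt _ _ hf; rewrite !payoff_cost.
under eq_bigr do rewrite subrK.
by rewrite lerD2r lerN2.
Qed.

Hypotheses (HQ : Q^T = Q) (HR : Rm^T = Rm) (HH : H^T = H).

Lemma cost_subZ u D r :
  cost (fun s => u s - r *: D s) = cost u - 2 * r * cost_bilin u D + r ^+ 2 * cost_quad D.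
Proof.
rewrite /cost /cost_bilin /cost_quad.
under eq_bigr do rewrite traj_subZ quadBZ //.
rewrite big_quadratic.
under [X in _ + X = _]eq_bigr do rewrite !quadBZ //.
rewrite (eq_bigr (fun t : 'I_N =>
   (quad Rm (u t) + lam t * quad H (u t))
   - 2 * r * (bilin Rm (u t) (D t) + lam t * bilin H (u t) (D t))
   + r ^+ 2 * (quad Rm (D t) + lam t * quad H (D t)))); last by move=> t _; ring.
by rewrite big_quadratic; ring.
Qed.

(* First-order optimality in every direction [D]: moving by [-r D] changes the
   cost by [-2 r (cost_bilin u D) + O(r^2)]. *)
Lemma cost_min_bilin_le0 u :
  (forall v, cost u <= cost v) -> forall D, cost_bilin u D <= 0.
Proof.
move=> opt D; apply: (@le0_of_le_scaled _ _ (cost_quad D / 2)) => r r0 r1.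
have := opt (fun s => u s - r *: D s); rewrite cost_subZ => h.
have : r * (2 * cost_bilin u D) <= r * (r * cost_quad D) by rewrite expr2 in h; lra.
rewrite ler_pM2l // mulrA; lra.
Qed.

End AgentCost.

Definition geom_tail (R : realType) (N : nat) (al : R) (k : nat) : R :=
  \sum_(k.+1 <= t < N.+1) al ^+ (2 * (t - k.+1)).

Lemma geom_tail_ge0 (R : realType) N (al : R) k : 0 <= al -> 0 <= geom_tail N al k.
Proof. by move=> al0; apply: sumr_ge0 => t _; rewrite exprn_ge0. Qed.

Section StageCostBound.
Variable R : realType.
Variables (N d m : nat) (A : 'M[R]_d) (B : 'M[R]_(d, m)) (x0 : 'cV[R]_d)
  (Q : 'M[R]_d) (Rm : 'M[R]_m) (H : 'M[R]_m) (lam : nat -> R) (dl al be : R).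
Hypotheses (HQ : sym_pd Q) (HR : sym_pd Rm) (HH : sym_pd H).
Hypotheses (dl0 : 0 <= dl) (al0 : 0 <= al) (be0 : 0 <= be).
Hypotheses (nQ : opnorm Q <= dl) (nA : opnorm A <= al) (nB : opnorm B <= be).
Hypothesis lam0 : forall t, (t < N)%N -> 0 <= lam t.
Variable U : nat -> 'cV[R]_m.
Hypothesis U_opt : forall v, cost N A B x0 Q Rm H lam U <= cost N A B x0 Q Rm H lam v.
Variable k : nat.
Hypothesis kN : (k < N)%N.

Local Notation x := (traj A B x0 U).
Local Notation stage_cost := (quad Rm (U k) + lam k * quad H (U k)).

Definition impulse_input t := if t == k then U k else 0.
Definition tail_input t := if (k <= t)%N then U t else 0.
Definition state_after t := if (k < t)%N then x t else 0.
Definition free_state_after t := if (k < t)%N then iter (t - k) (mulmx A) (x k) else 0.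

Local Notation impulse_state := (traj A B 0 impulse_input).

Lemma impulse_state_early t : (t <= k)%N -> impulse_state t = 0.
Proof.
elim: t => [|t IH] ht //=.
by rewrite IH ?(ltnW ht) // /impulse_input (ltn_eqF ht) !mulmx0 addr0.
Qed.

Lemma impulse_state_late i : impulse_state (k + i.+1) = iter i (mulmx A) (B *m U k).
Proof.
elim: i => [|i IH].
  by rewrite addn1 /= impulse_state_early // /impulse_input eqxx mulmx0 add0r.
rewrite addnS /= IH /impulse_input.
have -> : (k + i.+1 == k) = false by apply/negbTE; lia.
by rewrite mulmx0 addr0.
Qed.

Lemma tail_state_early t : (t <= k)%N -> traj A B 0 tail_input t = 0.
Proof.
elim: t => [|t IH] ht //=.
rewrite /tail_input; have -> : (k <= t)%N = false by lia.
by rewrite IH ?(ltnW ht) // !mulmx0 addr0.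
Qed.

Lemma state_sub_tail_state i :
  x (k + i) - traj A B 0 tail_input (k + i) = iter i (mulmx A) (x k).
Proof.
elim: i => [|i IH]; first by rewrite addn0 tail_state_early // subr0.
rewrite addnS /= /tail_input leq_addr -IH mulmxBr.
by rewrite opprD addrACA subrr addr0.
Qed.

Lemma impulse_first_order :
  \sum_(t < N.+1) bilin Q (state_after t) (impulse_state t) + stage_cost <= 0.
Proof.
have := cost_min_bilin_le0 HQ.1 HR.1 HH.1 U_opt impulse_input; rewrite /cost_bilin.
rewrite (@sum_ord_single _ (fun t => bilin Rm (U t) (impulse_input t)
                             + lam t * bilin H (U t) (impulse_input t)) k) //; last first.
  by move=> t /negbTE ht; rewrite /impulse_input ht !bilin0r mulr0 addr0.
rewrite /impulse_input eqxx -!quad_bilin.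
congr (_ + _ <= _); apply: eq_bigr => t _.
rewrite /state_after; case: ltnP => // ht.
by rewrite impulse_state_early // !bilin0r.
Qed.

Lemma tail_first_order :
  \sum_(t < N.+1) quad Q (state_after t)
  - \sum_(t < N.+1) bilin Q (state_after t) (free_state_after t) + stage_cost <= 0.
Proof.
apply: le_trans (cost_min_bilin_le0 HQ.1 HR.1 HH.1 U_opt tail_input); apply: lerD.
  rewrite -sumrB le_eqVlt; apply/orP; left; apply/eqP.
  apply: eq_bigr => t _; rewrite /state_after /free_state_after; case: ltnP => ht.
    have hq := state_sub_tail_state (t - k); rewrite subnKC in hq; last exact: ltnW.
    have -> : traj A B 0 tail_input t = x t - iter (t - k) (mulmx A) (x k).
      by rewrite -hq opprB addrCA subrr addr0.
    by rewrite bilinBr quad_bilin.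
  by rewrite tail_state_early // bilin0r quad0 bilin0l subr0.
rewrite (bigD1 (Ordinal kN)) //= /tail_input leqnn -!quad_bilin lerDl.
apply: sumr_ge0 => t _; case: ifP => _; last by rewrite !bilin0r mulr0 addr0.
by rewrite -!quad_bilin addr_ge0 ?mulr_ge0 ?lam0 ?sym_pd_quad_ge0.
Qed.

Lemma free_state_cost_le :
  \sum_(t < N.+1) quad Q (free_state_after t)
  <= dl * al ^+ 2 * vnorm (x k) ^+ 2 * geom_tail N al k.
Proof.
rewrite /geom_tail mulr_sumr -sum_ord_tail; last exact: ltnW.
apply: ler_sum => t _; rewrite /free_state_after; case: ltnP => ht; last by rewrite quad0.
apply: (le_trans (quad_le_opnorm _ nQ)).
have hv := vnorm_iter_mulmx_le (x k) (t - k) al0 nA.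
have hv2 : vnorm (iter (t - k) (mulmx A) (x k)) ^+ 2 <= al ^+ (2 * (t - k)) * vnorm (x k) ^+ 2.
  by rewrite mulnC exprM -exprMn !expr2 ler_pM ?vnorm_ge0.
rewrite (_ : (2 * (t - k) = 2 + 2 * (t - k.+1))%N) in hv2; last by clear -ht; lia.
rewrite exprD in hv2; apply: le_trans (ler_wpM2l dl0 hv2) _.
by rewrite le_eqVlt; apply/orP; left; apply/eqP; ring.
Qed.

Lemma impulse_cost_le :
  \sum_(t < N.+1) quad Q (impulse_state t)
  <= dl * be ^+ 2 * vnorm (U k) ^+ 2 * geom_tail N al k.
Proof.
rewrite /geom_tail mulr_sumr -sum_ord_tail; last exact: ltnW.
apply: ler_sum => t _; case: ltnP => ht; last by rewrite impulse_state_early // quad0.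
apply: (le_trans (quad_le_opnorm _ nQ)).
have := impulse_state_late (t - k.+1); have -> : (k + (t - k.+1).+1 = t)%N by clear -ht; lia.
move=> ->.
have hv : vnorm (iter (t - k.+1) (mulmx A) (B *m U k)) <= al ^+ (t - k.+1) * (be * vnorm (U k)).
  apply: (le_trans (vnorm_iter_mulmx_le _ _ al0 nA)); rewrite ler_wpM2l ?exprn_ge0 //.
  apply: (le_trans (vnorm_mulmx_le_opnorm _ _)); by rewrite ler_wpM2r ?vnorm_ge0.
have hv2 : vnorm (iter (t - k.+1) (mulmx A) (B *m U k)) ^+ 2
           <= al ^+ (2 * (t - k.+1)) * (be ^+ 2 * vnorm (U k) ^+ 2).
  by rewrite mulnC exprM -!exprMn !expr2 ler_pM ?vnorm_ge0.
apply: le_trans (ler_wpM2l dl0 hv2) _.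
by rewrite le_eqVlt; apply/orP; left; apply/eqP; ring.
Qed.

(* The two first-order conditions, after Cauchy-Schwarz in the [Q]-inner
   product, read [K <= z p - z^2] and [K <= z q] with [z^2] the cost of the
   states after [k]; hence [K <= p q]. *)
Lemma stage_cost_le :
  stage_cost <= dl * geom_tail N al k * al * be * vnorm (x k) * vnorm (U k).
Proof.
have Qpsd : forall v, 0 <= quad Q v by move=> v; exact: sym_pd_quad_ge0.
set X := \sum_(t < N.+1) quad Q (state_after t).
set Pa := \sum_(t < N.+1) quad Q (free_state_after t).
set Gb := \sum_(t < N.+1) quad Q (impulse_state t).
have X0 : 0 <= X by apply: sumr_ge0.
have Pa0 : 0 <= Pa by apply: sumr_ge0.
have Gb0 : 0 <= Gb by apply: sumr_ge0.
have hX : Num.sqrt X ^+ 2 = X by rewrite sqr_sqrtr.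
have cs_free := cauchy_schwarz_bilin_sum
  (fun t : 'I_N.+1 => state_after t) (fun t => free_state_after t) HQ.1 Qpsd.
have cs_imp := cauchy_schwarz_bilin_sum
  (fun t : 'I_N.+1 => state_after t) (fun t => - impulse_state t) HQ.1 Qpsd.
have sum_bilinN : \sum_(t < N.+1) bilin Q (state_after t) (- impulse_state t)
    = - \sum_(t < N.+1) bilin Q (state_after t) (impulse_state t).
  by rewrite -sumrN; apply: eq_bigr => t _; rewrite bilinNr.
have sum_quadN : \sum_(t < N.+1) quad Q (- impulse_state t) = Gb.
  by apply: eq_bigr => t _; rewrite quadN.
rewrite sum_bilinN sum_quadN in cs_imp.
have Kp : stage_cost <= Num.sqrt X * Num.sqrt Pa - Num.sqrt X ^+ 2.
  by have := tail_first_order; rewrite hX -/X; lra.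
have Kq : stage_cost <= Num.sqrt X * Num.sqrt Gb.
  by have := impulse_first_order; lra.
apply: (le_trans (le_mulr_of_two_bounds _ _ _ Kp Kq)); rewrite ?sqrtr_ge0 //.
have bound0 : 0 <= dl * geom_tail N al k * al * be * vnorm (x k) * vnorm (U k).
  by rewrite !mulr_ge0 ?vnorm_ge0 ?geom_tail_ge0.
rewrite -sqrtrM // -(ger0_norm bound0) -sqrtr_sqr ler_wsqrtr //.
apply: le_trans (ler_pM Pa0 Gb0 free_state_cost_le impulse_cost_le) _.
by rewrite le_eqVlt; apply/orP; left; apply/eqP; ring.
Qed.

End StageCostBound.

Section TrajectoryBound.
Variable R : realType.

Lemma vnorm_traj_le d m (A : 'M[R]_d) (B : 'M[R]_(d, m)) x0 (u : nat -> 'cV[R]_m)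
    (al be gam : R) (s : nat -> R) t :
  0 <= al -> 0 <= be -> opnorm A <= al -> opnorm B <= be -> vnorm x0 <= gam ->
  (forall j, (j < t)%N -> vnorm (u j) <= s j) ->
  vnorm (traj A B x0 u t) <= gam * al ^+ t + be * \sum_(j < t) s j * al ^+ (t - j.+1).
Proof.
move=> al0 be0 hA hB hx; elim: t => [|t IH] hu.
  by rewrite expr0 mulr1 big_ord0 mulr0 addr0.
rewrite /= big_ord_recr /= subnn expr0 mulr1.
apply: (le_trans (vnormD _ _)).
have hAx : vnorm (A *m traj A B x0 u t)
           <= al * (gam * al ^+ t + be * \sum_(j < t) s j * al ^+ (t - j.+1)).
  apply: (le_trans (vnorm_mulmx_le_opnorm _ _)).
  apply: (le_trans (ler_wpM2r (vnorm_ge0 _) hA)).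
  by rewrite ler_wpM2l // IH // => j hj; apply: hu; apply: ltnW.
have hBu : vnorm (B *m u t) <= be * s t.
  apply: (le_trans (vnorm_mulmx_le_opnorm _ _)).
  apply: (le_trans (ler_wpM2r (vnorm_ge0 _) hB)).
  by rewrite ler_wpM2l // hu.
have shift : al * (gam * al ^+ t + be * \sum_(j < t) s j * al ^+ (t - j.+1)) =
    gam * al ^+ t.+1 + be * \sum_(j < t) s j * al ^+ (t.+1 - j.+1).
  rewrite mulrDr exprS mulrCA; congr (_ + _).
  rewrite mulrCA mulr_sumr; congr (be * _); apply: eq_bigr => j _.
  rewrite mulrCA -exprS subSS; congr (_ * _ ^+ _).
  by have := ltn_ord j; clear; lia.
by rewrite mulrDr addrA -shift; apply: lerD.
Qed.

Lemma geom_tail_mul_traj_bound (al be gam : R) (s : nat -> R) k N :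
  geom_tail N al k * al * (gam * al ^+ k + be * \sum_(j < k) s j * al ^+ (k - j.+1)) =
  \sum_(k.+1 <= t < N.+1) (gam * al ^+ (2 * t - k - 1)
        + be * \sum_(j < k) s j * al ^+ (2 * t - j - k - 2)).
Proof.
rewrite /geom_tail !mulr_suml; apply: eq_big_nat => t /andP[kt _].
rewrite -exprSr mulrDr; congr (_ + _).
  by rewrite mulrCA -exprD; congr (_ * _ ^+ _); clear -kt; lia.
rewrite mulrCA mulr_sumr; congr (be * _); apply: eq_bigr => j _.
rewrite mulrCA -exprD; congr (_ * _ ^+ _).
by have := ltn_ord j; clear -kt; lia.
Qed.

End TrajectoryBound.

Section Equilibrium.
Variable R : realType.
Variables (n N d m : nat) (A : 'I_n -> 'M[R]_d) (B : 'I_n -> 'M[R]_(d, m))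
  (H : 'I_n -> 'M[R]_m) (x0 : 'I_n -> 'cV[R]_d) (a : 'I_n -> nat -> R)
  (Q : 'I_n -> 'M[R]_d) (Rm : 'I_n -> 'M[R]_m)
  (lam : nat -> R) (U : 'I_n -> nat -> 'cV[R]_m) (E : 'I_n -> nat -> R).
Hypothesis ce : competitive_equilibrium N A B x0 H a Q Rm lam U E.

(* At a negative price, buying one more unit would raise the payoff. *)
Lemma equilibrium_price_ge0 (i : 'I_n) t : (t < N)%N -> 0 <= lam t.
Proof.
move=> tN; have [fE opt] := ce.1 i.
have hf : feasible N (H i) (a i) (U i) (fun s => E i s + (if s == t then -1 else 0)).
  by move=> s sN; have := fE s sN; case: (s == t); lra.
by have := opt _ _ hf; rewrite payoff_shift_trade //; lra.
Qed.

Lemma equilibrium_budget_binds i t : (t < N)%N -> 0 < lam t ->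
  E i t = a i t - quad (H i) (U i t).
Proof.
move=> tN lam0; have [fE opt] := ce.1 i.
have := fE t tN; rewrite le_eqVlt => /orP[/eqP //|slack].
pose c := a i t - quad (H i) (U i t) - E i t.
have hf : feasible N (H i) (a i) (U i) (fun s => E i s + (if s == t then c else 0)).
  by move=> s sN; have := fE s sN; case: eqP => [->|_]; rewrite /c; lra.
have := opt _ _ hf; rewrite payoff_shift_trade //.
have : 0 < lam t * c by rewrite mulr_gt0 // subr_gt0.
lra.
Qed.

Lemma equilibrium_consumption_sum t : (t < N)%N -> 0 < lam t ->
  \sum_(i < n) quad (H i) (U i t) = Ctot a t.
Proof.
move=> tN lam0.
have -> : Ctot a t = \sum_(i < n) (a i t - E i t) by rewrite sumrB (ce.2 t tN) subr0.
by apply: eq_bigr => i _; rewrite equilibrium_budget_binds //; ring.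
Qed.

Hypothesis HH : forall i, sym_pd (H i).

Lemma equilibrium_consumption_le i t : (t < N)%N -> quad (H i) (U i t) <= Ctot a t.
Proof.
move=> tN; have sum_le : \sum_(j < n) quad (H j) (U j t) <= Ctot a t.
  have -> : Ctot a t = \sum_(j < n) (a j t - E j t) by rewrite sumrB (ce.2 t tN) subr0.
  by apply: ler_sum => j _; have := (ce.1 j).1 t tN; lra.
apply: le_trans sum_le; rewrite (bigD1 i) //= lerDl.
by apply: sumr_ge0 => j _; apply: sym_pd_quad_ge0.
Qed.

Lemma equilibrium_input_le (rho : R) i t :
  0 < rho -> psd (H i - rho%:M) -> (t < N)%N ->
  vnorm (U i t) <= Num.sqrt (Ctot a t / rho).
Proof.
move=> rho0 hHrho tN.
have hsq : rho * vnorm (U i t) ^+ 2 <= Ctot a t.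
  have := hHrho (U i t); rewrite quad_subr_scalar => hp.
  have := equilibrium_consumption_le i tN; lra.
rewrite -(ger0_norm (vnorm_ge0 (U i t))) -sqrtr_sqr ler_wsqrtr //.
by rewrite ler_pdivlMr // mulrC.
Qed.

Lemma equilibrium_price_consumption_le (gam al be rho dmax : R) i t :
  0 <= dmax -> 0 <= al -> 0 <= be -> 0 < rho ->
  vnorm (x0 i) <= gam -> opnorm (A i) <= al -> opnorm (B i) <= be ->
  psd (H i - rho%:M) -> sym_pd (Q i) -> sym_pd (Rm i) -> opnorm (Q i) <= dmax ->
  (t < N)%N ->
  lam t * quad (H i) (U i t) <=
  dmax * (geom_tail N al t * al *
          (gam * al ^+ t + be * \sum_(j < t) Num.sqrt (Ctot a j / rho) * al ^+ (t - j.+1)))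
  * be * vnorm (U i t).
Proof.
move=> dm0 al0 be0 rho0 hx hA hB hHrho hQ hR hQn tN.
have lam0 : forall j, (j < N)%N -> 0 <= lam j := equilibrium_price_ge0 i.
have [fE opt] := ce.1 i.
have hK := stage_cost_le hQ hR (HH i) dm0 al0 be0 hQn hA hB lam0
             (payoff_max_cost_min fE opt) tN.
have hx_t := vnorm_traj_le (u := U i) (s := fun j => Num.sqrt (Ctot a j / rho))
  al0 be0 hA hB hx (fun j jt => equilibrium_input_le rho0 hHrho (ltn_trans jt tN)).
apply: le_trans (_ : quad (Rm i) (U i t) + lam t * quad (H i) (U i t) <= _).
  by rewrite lerDr sym_pd_quad_ge0.
apply: (le_trans hK).
have -> : dmax * geom_tail N al t * al * be * vnorm (traj (A i) (B i) (x0 i) (U i) t)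
            * vnorm (U i t)
          = dmax * geom_tail N al t * al * be * vnorm (U i t)
            * vnorm (traj (A i) (B i) (x0 i) (U i) t) by ring.
rewrite [X in _ <= X](_ : _ = dmax * geom_tail N al t * al * be * vnorm (U i t) *
  (gam * al ^+ t + be * \sum_(j < t) Num.sqrt (Ctot a j / rho) * al ^+ (t - j.+1))); last by ring.
by rewrite ler_wpM2l // !mulr_ge0 ?vnorm_ge0 ?geom_tail_ge0.
Qed.

End Equilibrium.

Unset Implicit Arguments.

Theorem theorem3 (R : realType) (n N d m : nat)
    (A : 'I_n -> 'M[R]_d) (B : 'I_n -> 'M[R]_(d, m)) (H : 'I_n -> 'M[R]_m)
    (x0 : 'I_n -> 'cV[R]_d) (a : 'I_n -> nat -> R)
    (gamma alpha beta rho lamd dmax : R) :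
  (1 <= N)%N ->
  0 < gamma -> 0 < alpha -> 0 < beta -> 0 < rho ->
  (forall i, vnorm (x0 i) <= gamma) ->
  (forall i, opnorm (A i) <= alpha) ->
  (forall i, opnorm (B i) <= beta) ->
  (forall i, sym_pd (H i)) ->
  (forall i, psd (H i - rho%:M)) ->
  (forall t, (t < N)%N -> 0 < Ctot a t) ->
  0 < lamd -> 0 < dmax ->
  dmax * (\sum_(1 <= t < N.+1) gamma * alpha ^+ (2 * t - 1))
    <= Num.sqrt (Ctot a 0 * rho) / (n%:R * beta) * lamd ->
  (forall k, (0 < k)%N -> (k < N)%N ->
     dmax * (\sum_(k.+1 <= t < N.+1)
               (gamma * alpha ^+ (2 * t - k - 1)
                + beta * \sum_(j < k) Num.sqrt (Ctot a j / rho)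
                                      * alpha ^+ (2 * t - j - k - 2)))
     <= Num.sqrt (Ctot a k * rho) / (n%:R * beta) * lamd) ->
  forall (Q : 'I_n -> 'M[R]_d) (Rm : 'I_n -> 'M[R]_m),
    (forall i, sym_pd (Q i)) -> (forall i, sym_pd (Rm i)) ->
    (forall i, opnorm (Q i) <= dmax) ->
  forall (lam : nat -> R) (U : 'I_n -> nat -> 'cV[R]_m) (E : 'I_n -> nat -> R),
    competitive_equilibrium N A B x0 H a Q Rm lam U E ->
    forall t, (t < N)%N -> lam t <= lamd.
Proof.
move=> N1 g0 a0 b0 r0 hx hA hB hH hHrho hC l0 d0 hyp0 hypk Q Rm hQ hR hQn lam U E ce t tN.
have [lam_le0|lam0] := lerP (lam t) 0; first exact: le_trans lam_le0 (ltW l0).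
have n0 : (0 < n)%N.
  rewrite lt0n; apply/eqP => n0; move: (hC 0%N N1); rewrite /Ctot big1 ?ltxx //.
  by move=> i; have := ltn_ord i; rewrite {2}n0.
have [i] := exists_ge_mean (fun i => quad (H i) (U i t)) n0.
rewrite /= (equilibrium_consumption_sum ce tN lam0) => hi.
have hyp_t := equilibrium_price_consumption_le ce hH (ltW d0) (ltW a0) (ltW b0) r0
                (hx i) (hA i) (hB i) (hHrho i) (hQ i) (hR i) (hQn i) tN.
have hbound : dmax * (geom_tail N alpha t * alpha * (gamma * alpha ^+ t +
    beta * \sum_(j < t) Num.sqrt (Ctot a j / rho) * alpha ^+ (t - j.+1)))
    <= Num.sqrt (Ctot a t * rho) / (n%:R * beta) * lamd.
  rewrite (geom_tail_mul_traj_bound _ _ _ (fun j => Num.sqrt (Ctot a j / rho))).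
  have [t0|tp] := posnP t; last exact: hypk.
  by rewrite t0; under eq_bigr do rewrite big_ord0 mulr0 addr0 subn0.
apply: (price_le_of_bounds (n := n%:R) r0 (hC t tN) (ltW l0) _ (vnorm_ge0 _) _ _ hyp_t).
- by rewrite ler1n.
- by rewrite -subr_ge0 -quad_subr_scalar; apply: hHrho.
- by rewrite mulrC -ler_pdivrMr // ltr0n.
- rewrite mulrCA -ler_pdivlMr ?mulr_gt0 ?ltr0n //.
  by rewrite [X in _ <= X]mulrAC.
Qed.
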